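(* Let $\Delta$ be a noncommutative discrete valuation ring with uniformiser $\pi$ and finite residue field, let $D$ be its classical division ring of fractions, and let $r\ge1$, $\Lambda=\mathrm{M}_r(\Delta)$ and $A=\mathrm{M}_r(D)$. For $x\in\Lambda$ put $\mathcal{O}(x)=(\Lambda^\times x+\pi\Lambda)\cap A^\times$, a subset of $\Lambda\cap A^\times$ stable under left multiplication by $\Lambda^\times$. Let $y\in\Lambda$. Then for any $a,b\in\Lambda^\times$ and $c\in\pi\Lambda$, $$\sum_{x\in \Lambda^\times\backslash \mathcal{O}(y)}v^{\ell({}_{\Lambda}\Lambda/\Lambda x)}=\sum_{x\in \Lambda^\times\backslash \mathcal{O}(ayb+c)}v^{\ell({}_{\Lambda}\Lambda/\Lambda x)}$$ as formal power series in $v$, where each sum runs over the orbits of $\Lambda^\times$ acting by left multiplication (choosing one representative $x$ per orbit) and $\ell({}_\Lambda\Lambda/\Lambda x)$ is the length of the left $\Lambda$-module $\Lambda/\Lambda x$.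
   Context: A noncommutative discrete valuation ring is a domain $\Delta$ with a normal regular element $\pi$ (uniformiser) such that $\pi\Delta=\Delta\pi$ is the Jacobson radical and $\Delta/(\pi)$ is a division ring, here assumed finite. $\Lambda^\times$, $A^\times$ denote unit groups, and $\pi\Lambda$ is the set of matrices with all entries in $\pi\Delta$. *)

From HB Require Import structures.
From mathcomp Require Import all_boot all_algebra.
Set Implicit Arguments. Unset Strict Implicit. Unset Printing Implicit Defensive.
Import GRing.Theory.
Local Open Scope ring_scope.

(* x lies in the two-sided ideal p R (= R p since p is normal) *)
Definition in_pi (R : unitRingType) (p x : R) : Prop := exists t : R, x = p * t.

Definition is_domain (R : unitRingType) : Prop :=
  forall a b : R, a * b = 0 -> a = 0 \/ b = 0.

Definition normal_elt (R : unitRingType) (p : R) : Prop :=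
  (forall a : R, exists b : R, p * a = b * p) /\
  (forall a : R, exists b : R, a * p = p * b).

Definition regular_elt (R : unitRingType) (p : R) : Prop :=
  forall a : R, (p * a = 0 -> a = 0) /\ (a * p = 0 -> a = 0).

Definition in_jacobson (R : unitRingType) (x : R) : Prop :=
  forall y : R, (1 - y * x) \is a GRing.unit.

Definition residue_division (R : unitRingType) (p : R) : Prop :=
  ~ in_pi p 1 /\
  forall x : R, ~ in_pi p x ->
    exists y : R, in_pi p (x * y - 1) /\ in_pi p (y * x - 1).

Definition residue_finite (R : unitRingType) (p : R) : Prop :=
  exists s : seq R, forall x : R, exists2 y, y \in s & in_pi p (x - y).

Definition pi_separated (R : unitRingType) (p : R) : Prop :=
  forall x : R, (forall n : nat, in_pi (p ^+ n) x) -> x = 0.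

Definition ncDVR (R : unitRingType) (p : R) : Prop :=
  is_domain R /\ normal_elt p /\ regular_elt p /\
  (forall x : R, in_jacobson x <-> in_pi p x) /\
  residue_division p /\ residue_finite p /\ pi_separated p.

Definition division_ring (D : unitRingType) : Prop :=
  forall d : D, d != 0 -> d \is a GRing.unit.

Definition classical_fractions (R D : unitRingType) (f : R -> D) : Prop :=
  [/\ injective f,
      (forall d : D, exists a s : R, s != 0 /\ d = f a * (f s)^-1) &
      (forall d : D, exists a s : R, s != 0 /\ d = (f s)^-1 * f a)].

Definition mx_unit (R : unitRingType) (r : nat) (X : 'M[R]_r) : Prop :=
  exists Y : 'M[R]_r, X *m Y = 1%:M /\ Y *m X = 1%:M.

Definition mx_unit_in (R D : unitRingType) (f : R -> D) (r : nat)
  (X : 'M[R]_r) : Prop :=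
  exists Y : 'M[D]_r, map_mx f X *m Y = 1%:M /\ Y *m map_mx f X = 1%:M.

Definition in_piM (R : unitRingType) (p : R) (r : nat) (X : 'M[R]_r) : Prop :=
  forall i j, in_pi p (X i j).

Definition Oset (R D : unitRingType) (p : R) (f : R -> D) (r : nat)
  (y : 'M[R]_r) : 'M[R]_r -> Prop :=
  fun x => (exists u c : 'M[R]_r, [/\ mx_unit u, in_piM p c & x = u *m y + c])
           /\ mx_unit_in f x.

Definition is_left_ideal (R : unitRingType) (r : nat) (L : 'M[R]_r -> Prop) :=
  [/\ L 0, (forall a b, L a -> L b -> L (a + b)) &
      (forall m a, L a -> L (m *m a))].

Definition lideal (R : unitRingType) (r : nat) (x : 'M[R]_r) : 'M[R]_r -> Prop :=
  fun z => exists m : 'M[R]_r, z = m *m x.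

Definition strict_sub (T : Type) (L L' : T -> Prop) : Prop :=
  (forall x, L x -> L' x) /\ exists x, L' x /\ ~ L x.

(* a chain L = c_0 < c_1 < ... < c_k = Lambda of left ideals, i.e. a chain of
   submodules of the left module Lambda / L of length k *)
Definition lchain (R : unitRingType) (r : nat) (L : 'M[R]_r -> Prop) (k : nat) :=
  exists c : nat -> 'M[R]_r -> Prop,
    [/\ (forall x, c 0%N x <-> L x), (forall x, c k x),
        (forall i, (i <= k)%N -> is_left_ideal (c i)) &
        (forall i, (i < k)%N -> strict_sub (c i) (c i.+1))].

Definition length_is (R : unitRingType) (r : nat) (L : 'M[R]_r -> Prop) (n : nat) :=
  lchain L n /\ forall m, lchain L m -> (m <= n)%N.

Definition orbit (R : unitRingType) (r : nat) (x : 'M[R]_r) : 'M[R]_r -> Prop :=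
  fun z => exists u : 'M[R]_r, mx_unit u /\ z = u *m x.

(* the set of Lambda^x-orbits in S whose representatives x have
   length(Lambda / Lambda x) = n; its cardinality is the coefficient of v^n *)
Definition orbits_len (R : unitRingType) (r : nat) (S : 'M[R]_r -> Prop) (n : nat)
  : ('M[R]_r -> Prop) -> Prop :=
  fun O => exists x, [/\ S x, length_is (lideal x) n & O = orbit x].

Definition equipotent (T U : Type) (A : T -> Prop) (B : U -> Prop) : Prop :=
  exists g : T -> U,
    [/\ (forall x, A x -> B (g x)),
        (forall x y, A x -> A y -> g x = g y -> x = y) &
        (forall z, B z -> exists x, A x /\ g x = z)].

(* Right multiplication by a unit b of Lambda is an automorphism of the left
   Lambda-module Lambda.  It maps O(y) onto O(yb), Lambda^x-orbits onto
   Lambda^x-orbits and Lambda x onto Lambda xb, hence preserves the length of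
   Lambda / Lambda x.  Moreover O(ayb + c) = O(yb): since pi is normal,
   pi Lambda is a two-sided ideal, so
   Lambda^x a yb + c + pi Lambda = Lambda^x yb + pi Lambda. *)
From mathcomp Require Import all_boot all_algebra.
From Stdlib Require Import FunctionalExtensionality PropExtensionality.
Set Implicit Arguments. Unset Strict Implicit.
Import GRing.Theory.
Local Open Scope ring_scope.

Section PiIdeal.
Variables (R : unitRingType) (p : R).
Hypothesis normal_p : normal_elt p.

Lemma in_pi0 : in_pi p 0.
Proof. by exists 0; rewrite mulr0. Qed.

Lemma in_piB x y : in_pi p x -> in_pi p y -> in_pi p (x - y).
Proof. by move=> [s ->] [t ->]; exists (s - t); rewrite mulrBr. Qed.

Lemma in_piD x y : in_pi p x -> in_pi p y -> in_pi p (x + y).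
Proof. by move=> [s ->] [t ->]; exists (s + t); rewrite mulrDr. Qed.

Lemma in_piMr s x : in_pi p x -> in_pi p (x * s).
Proof. by move=> [t ->]; exists (t * s); rewrite mulrA. Qed.

Lemma in_piMl s x : in_pi p x -> in_pi p (s * x).
Proof.
move=> [t ->]; have [b sp_pb] := normal_p.2 s.
by exists (b * t); rewrite mulrA sp_pb mulrA.
Qed.

Variable r : nat.
Implicit Types x y : 'M[R]_r.

Lemma in_piM_add x y : in_piM p x -> in_piM p y -> in_piM p (x + y).
Proof. by move=> px py i j; rewrite mxE; apply: in_piD. Qed.

Lemma in_piM_sub x y : in_piM p x -> in_piM p y -> in_piM p (x - y).
Proof. by move=> px py i j; rewrite !mxE; apply: in_piB. Qed.

Lemma in_piM_mulmxl (m : 'M[R]_r) x : in_piM p x -> in_piM p (m *m x).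
Proof.
move=> px i j; rewrite mxE; apply: (big_ind (in_pi p)).
- exact: in_pi0.
- exact: in_piD.
- by move=> k _; apply: in_piMl.
Qed.

Lemma in_piM_mulmxr (m : 'M[R]_r) x : in_piM p x -> in_piM p (x *m m).
Proof.
move=> px i j; rewrite mxE; apply: (big_ind (in_pi p)).
- exact: in_pi0.
- exact: in_piD.
- by move=> k _; apply: in_piMr.
Qed.

End PiIdeal.

Section Units.
Variables (R D : unitRingType) (f : {rmorphism R -> D}) (r : nat).
Implicit Types u v x : 'M[R]_r.

Lemma mx_unitM u v : mx_unit u -> mx_unit v -> mx_unit (u *m v).
Proof.
move=> [u' [uu' u'u]] [v' [vv' v'v]]; exists (v' *m u'); split.
  by rewrite mulmxA -(mulmxA u) vv' mulmx1 uu'.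
by rewrite mulmxA -(mulmxA v') u'u mulmx1 v'v.
Qed.

Lemma mx_unit_inM x u : mx_unit_in f x -> mx_unit u -> mx_unit_in f (x *m u).
Proof.
move=> [X [xX Xx]] [u' [uu' u'u]]; exists (map_mx f u' *m X); split.
  rewrite map_mxM mulmxA -(mulmxA _ (map_mx f u)) -map_mxM uu'.
  by rewrite map_mx1 mulmx1.
by rewrite map_mxM -mulmxA (mulmxA X) Xx mul1mx -map_mxM u'u map_mx1.
Qed.

End Units.

Section Oset.
Variables (R D : unitRingType) (p : R) (f : {rmorphism R -> D}) (r : nat).
Hypothesis normal_p : normal_elt p.
Implicit Types a b c x y : 'M[R]_r.

Lemma Oset_unit_translate a c y x : mx_unit a -> in_piM p c ->
  Oset p f (a *m y + c) x <-> Oset p f y x.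
Proof.
move=> [a' [aa' a'a]] pc; split=> -[[u [c0 [unit_u pc0 ->]]] unit_x]; split=> //.
  exists (u *m a), (u *m c + c0); split.
  - by apply: mx_unitM => //; exists a'.
  - by apply: in_piM_add => //; apply: in_piM_mulmxl.
  - by rewrite mulmxDr mulmxA addrA.
exists (u *m a'), (c0 - u *m a' *m c); split.
- by apply: mx_unitM => //; exists a.
- by apply: in_piM_sub => //; apply: in_piM_mulmxl.
- rewrite mulmxDr !mulmxA -(mulmxA u a' a) a'a mulmx1.
  by rewrite -addrA [c0 - _]addrC addNKr.
Qed.

Lemma Oset_mulmxr b y x : mx_unit b -> Oset p f y x -> Oset p f (y *m b) (x *m b).
Proof.
move=> unit_b [[u [c [unit_u pc ->]]] unit_x]; split; last exact: mx_unit_inM.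
exists u, (c *m b); split=> //; first exact: in_piM_mulmxr.
by rewrite mulmxDl mulmxA.
Qed.

End Oset.

Section RightTranslation.
Variables (R : unitRingType) (r : nat).
Implicit Types (b x z : 'M[R]_r) (L : 'M[R]_r -> Prop).

(* Surjectivity of z |-> z *m b' (it has the right inverse z |-> z *m b) is what
   keeps the inclusions of the pulled-back chain strict. *)
Lemma lchain_preim_mulmxr b b' L L' k : b *m b' = 1%:M ->
  (forall z, L' z <-> L (z *m b')) -> lchain L k -> lchain L' k.
Proof.
move=> bb' def_L' [c [c0 ck c_ideal c_strict]].
exists (fun i z => c i (z *m b')); split=> //.
- by move=> z; rewrite def_L' c0.
- move=> i le_ik; have [c_0 c_add c_mul] := c_ideal i le_ik; split.
  + by rewrite mul0mx.
  + by move=> u v cu cv; rewrite mulmxDl; apply: c_add.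
  + by move=> m u cu; rewrite -mulmxA; apply: c_mul.
- move=> i lt_ik; have [c_sub [z [cz not_cz]]] := c_strict i lt_ik.
  by split=> [z0|]; [apply: c_sub | exists (z *m b); rewrite -mulmxA bb' mulmx1].
Qed.

Lemma lideal_mulmxr b b' x z : b *m b' = 1%:M -> b' *m b = 1%:M ->
  lideal (x *m b) z <-> lideal x (z *m b').
Proof.
move=> bb' b'b; split=> -[m def_z]; exists m.
  by rewrite def_z -!mulmxA bb' mulmx1.
by rewrite mulmxA -def_z -mulmxA b'b mulmx1.
Qed.

Lemma length_lideal_mulmxr b x n : mx_unit b ->
  length_is (lideal x) n -> length_is (lideal (x *m b)) n.
Proof.
move=> [b' [bb' b'b]] [chain_n maximal]; split.
  apply: (lchain_preim_mulmxr bb' _ chain_n) => z; exact: lideal_mulmxr.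
move=> m /(lchain_preim_mulmxr b'b) chain_m; apply: maximal; apply: chain_m => z.
by rewrite (lideal_mulmxr _ _ bb' b'b) -mulmxA bb' mulmx1.
Qed.

Lemma orbit_mulmxr b b' x : b *m b' = 1%:M -> b' *m b = 1%:M ->
  (fun z => orbit x (z *m b')) = orbit (x *m b).
Proof.
move=> bb' b'b; apply: functional_extensionality => z.
apply: propositional_extensionality; split=> -[u [unit_u def_z]]; exists u.
  by split=> //; rewrite mulmxA -def_z -mulmxA b'b mulmx1.
by split=> //; rewrite def_z -!mulmxA bb' mulmx1.
Qed.

Lemma equipotent_orbits_len_mulmxr b b' (S S' : 'M[R]_r -> Prop) n :
  b *m b' = 1%:M -> b' *m b = 1%:M ->
  (forall x, S x -> S' (x *m b)) -> (forall x, S' x -> S (x *m b')) ->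
  equipotent (orbits_len S n) (orbits_len S' n).
Proof.
move=> bb' b'b SS' S'S; have unit_b : mx_unit b by exists b'.
have unit_b' : mx_unit b' by exists b.
exists (fun O z => O (z *m b')); split.
- move=> _ [x [Sx len_x ->]]; exists (x *m b); split.
  + exact: SS'.
  + exact: length_lideal_mulmxr.
  + exact: orbit_mulmxr.
- move=> O1 O2 _ _ /(congr1 (fun O => O (_ *m b))) eqO.
  apply: functional_extensionality => z.
  by have := eqO z; rewrite /= -mulmxA bb' mulmx1.
- move=> _ [x [S'x len_x ->]]; exists (orbit (x *m b')); split.
    exists (x *m b'); split=> //; first exact: S'S.
    exact: length_lideal_mulmxr.
  by rewrite (orbit_mulmxr _ bb' b'b) -mulmxA b'b mulmx1.
Qed.

End RightTranslation.

Theorem propositionB3 (R : unitRingType) (p : R) (D : unitRingType)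
    (f : {rmorphism R -> D}) (r : nat) :
  (0 < r)%N -> ncDVR p -> division_ring D -> classical_fractions f ->
  forall y a b c : 'M[R]_r,
    mx_unit a -> mx_unit b -> in_piM p c ->
    forall n : nat,
      equipotent (orbits_len (Oset p f y) n)
                 (orbits_len (Oset p f (a *m y *m b + c)) n).
Proof.
move=> _ [_ [normal_p _]] _ _ y a b c unit_a unit_b pc n.
have [b' [bb' b'b]] := unit_b; have unit_b' : mx_unit b' by exists b.
have O_translate x : Oset p f (a *m y *m b + c) x <-> Oset p f (y *m b) x.
  by rewrite -mulmxA; apply: Oset_unit_translate.
apply: (equipotent_orbits_len_mulmxr n bb' b'b) => x.
  by move=> Oy_x; apply/O_translate; apply: Oset_mulmxr.
move=> /O_translate /(Oset_mulmxr unit_b').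
by rewrite -mulmxA bb' mulmx1.
Qed.
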